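(* Let $\tau$ be a $*$-stopping time. Then $\tau\wedge T\in L_G^{1^*}(\Omega)$ for each given $T>0$, and $\tau\in\mathcal{L}_G^{1^*_*}(\Omega)$.
   Context: $\Omega=C_0^d(\mathbb{R}^+)$ is the space of continuous paths $\omega:[0,\infty)\to\mathbb{R}^d$ with $\omega_0=0$, $B$ the canonical process, $\mathcal F_t=\sigma\{B_s:s\le t\}$, $\hat{\mathbb{E}}$ the $G$-expectation ($G$ a monotone sublinear function on $d\times d$ symmetric matrices). $L^1_G(\Omega)$ (resp. $L^1_G(\Omega_t)$) is the completion of bounded Lipschitz cylinder functions $\varphi(B_{t_1},\dots,B_{t_n})$ (resp. with $t_i\le t$) under $\hat{\mathbb{E}}[|\cdot|]$. $\mathcal{P}$ is a weakly compact set of probability measures representing $\hat{\mathbb{E}}$, $\hat{\mathbb{E}}[X]=\sup_{P\in\mathcal{P}}E_P[X]$ for Borel $X$, $c(A)=\sup_{P\in\mathcal{P}}P(A)$, q.s. = outside a capacity-zero set. $L^0(\Omega)$ (resp. $L^0(\Omega_t)$) are $\mathcal B(\Omega)$- (resp. $\mathcal F_t$-)measurable maps into $[-\infty,\infty]$; $\mathbb{L}^1(\cdot)$ those with $\hat{\mathbb{E}}[|X|]<\infty$. $L_G^{1^*}(\Omega)=\{X\in\mathbb{L}^1(\Omega):\exists X_n\in L^1_G(\Omega),X_n\downarrow X\text{ q.s.}\}$, $L_G^{1^*}(\Omega_t)=\{X\in\mathbb{L}^1(\Omega_t):\exists X_n\in L^1_G(\Omega_t),X_n\downarrow X\text{ q.s.}\}$;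 $\mathcal{L}_G^{1^*_*}(\Omega)=\{X\in L^0(\Omega):\exists X_n\in L_G^{1^*}(\Omega),X_n\uparrow X\text{ q.s.}\}$. A random time $\tau:\Omega\to[0,\infty)$ is a $*$-stopping time if $I_{\{\tau\ge t\}}\in L_G^{1^*}(\Omega_t)$ for each $t\ge0$. *)

From HB Require Import structures.
From mathcomp Require Import all_boot all_order all_algebra.
From mathcomp Require Import all_classical all_reals all_analysis.
From mathcomp Require Import measurable_realfun.
Import Order.TTheory GRing.Theory Num.Theory numFieldNormedType.Exports.

Set Implicit Arguments.
Unset Strict Implicit.
Unset Printing Implicit Defensive.

Local Open Scope classical_set_scope.
Local Open Scope ring_scope.

(* The path space Omega = C_0^d(R^+).  A path on [0,oo) with w_0 = 0 is
   represented by its (unique) continuous extension to R which vanishes on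
   (-oo,0]; coordinates are indexed by 'I_d.                            *)
Record path (R : realType) (d : nat) := Path {
  pth :> R -> 'I_d -> R;
  pth_neg : forall t, t <= 0 -> forall i, pth t i = 0;
  pth_cont : forall i, continuous (fun t : R => pth t i : R) }.

Definition zero_path R d : path R d.
Proof. by exists (fun _ _ => 0) => // i; exact: cst_continuous. Defined.

HB.instance Definition _ R d := gen_eqMixin (path R d).
HB.instance Definition _ R d := gen_choiceMixin (path R d).
HB.instance Definition _ R d := isPointed.Build (path R d) (zero_path R d).

Section GFramework.
Variables (R : realType) (d : nat).

Definition gen_upto (t : R) : set (set (path R d)) :=
  [set E | exists (s : R) (i : 'I_d) (A : set R),
     0 <= s /\ s <= t /\ measurable A /\ E = (fun w : path R d => pth w s i) @^-1` A].

Definition gen_all : set (set (path R d)) :=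
  [set E | exists (s : R) (i : 'I_d) (A : set R),
     0 <= s /\ measurable A /\ E = (fun w : path R d => pth w s i) @^-1` A].

Local Notation Omega := (g_sigma_algebraType gen_all).

Definition Ft (t : R) : set (set Omega) := <<s gen_upto t >>.

Definition B (t : R) (w : Omega) : 'I_d -> R := pth w t.

Definition cylv n (ts : 'I_n -> R) (w : Omega) : 'M[R]_(n, d) :=
  \matrix_(k < n, i < d) B (ts k) w i.

Definition l1 m n (x : 'M[R]_(m, n)) : R := \sum_(k < m) \sum_(i < n) `|x k i|.

Definition bLip m n (phi : 'M[R]_(m, n) -> R) :=
  (exists M, forall x, `|phi x| <= M) /\
  (exists C, forall x y, `|phi x - phi y| <= C * l1 (x - y)).

Definition clLip m n (phi : 'M[R]_(m, n) -> R) :=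
  exists (C : R) (p : nat), forall x y,
    `|phi x - phi y| <= C * (1 + l1 x ^+ p + l1 y ^+ p) * l1 (x - y).

Definition cylB_upto (t : R) (X : Omega -> R) :=
  exists n (ts : 'I_n -> R) (phi : 'M[R]_(n, d) -> R),
    (forall k, 0 <= ts k <= t) /\ bLip phi /\ X = phi \o cylv ts.

Definition cylB (X : Omega -> R) :=
  exists n (ts : 'I_n -> R) (phi : 'M[R]_(n, d) -> R),
    (forall k, 0 <= ts k) /\ bLip phi /\ X = phi \o cylv ts.

Definition Lip_cyl (X : Omega -> R) :=
  exists n (ts : 'I_n -> R) (phi : 'M[R]_(n, d) -> R),
    (forall k, 0 <= ts k) /\ clLip phi /\ X = phi \o cylv ts.

Definition rowB (t : R) (w : Omega) : 'M[R]_(1, d) := \row_i B t w i.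
Definition incr (t s : R) (w : Omega) : 'M[R]_(1, d) :=
  \row_i (B (t + s) w i - B t w i).

Definition psd (A : 'M[R]_d) := forall v : 'I_d -> R,
  0 <= \sum_(i < d) \sum_(j < d) v i * A i j * v j.

Definition monotone_sublinear (G : 'M[R]_d -> R) :=
  (forall A C, A^T = A -> C^T = C -> psd (A - C) -> G C <= G A) /\
  (forall A C, A^T = A -> C^T = C -> G (A + C) <= G A + G C) /\
  (forall (l : R) A, A^T = A -> 0 <= l -> G (l *: A) = l * G A).

(* E is the G-expectation on L_ip(Omega): a sublinear expectation under which
   the canonical process is a G-Brownian motion with generator G. *)
Definition is_G_expectation (G : 'M[R]_d -> R) (E : (Omega -> R) -> R) :=
  (forall X Y, Lip_cyl X -> Lip_cyl Y -> (forall w, X w <= Y w) -> E X <= E Y) /\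
  (forall c : R, E (fun _ => c) = c) /\
  (forall X Y, Lip_cyl X -> Lip_cyl Y -> E (X \+ Y) <= E X + E Y) /\
  (forall X (l : R), Lip_cyl X -> 0 <= l -> E (fun w => l * X w) = l * E X) /\
  (forall (t s : R) (phi : 'M[R]_(1, d) -> R), 0 <= t -> 0 <= s -> clLip phi ->
     E (phi \o incr t s) = E (phi \o rowB s)) /\
  (forall (t s : R) n (ts : 'I_n -> R) (phi : 'M[R]_(n + 1, d) -> R),
     0 <= t -> 0 <= s -> (forall k, 0 <= ts k <= t) -> clLip phi ->
     E (fun w => phi (col_mx (cylv ts w) (incr t s w))) =
     E (fun w => E (fun w' => phi (col_mx (cylv ts w) (incr t s w'))))) /\
  (forall (t : R) (a : 'I_d -> R), 0 <= t ->
     E (fun w => \sum_(i < d) a i * B t w i) = 0 /\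
     E (fun w => - \sum_(i < d) a i * B t w i) = 0) /\
  (forall e : R, 0 < e -> exists2 delta : R, 0 < delta &
     forall t : R, 0 < t < delta ->
       `| E (fun w => Num.sqrt (\sum_(i < d) B t w i ^+ 2) ^+ 3) / t | < e) /\
  (forall A : 'M[R]_d, A^T = A ->
     G A = 2^-1 * E (fun w => \sum_(i < d) \sum_(j < d) A i j * B 1 w i * B 1 w j)).

Definition loc_unif_cvg (wn : nat -> Omega) (w : Omega) :=
  forall (N e : R), 0 < e -> exists K : nat, forall k, (K <= k)%N ->
    forall t, 0 <= t <= N -> forall i, `|B t (wn k) i - B t w i| < e.

(* continuity for the topology of locally uniform convergence
   (metrizable, so sequential continuity is continuity) *)
Definition bcontinuous (f : Omega -> R) :=
  (exists M, forall w, `|f w| <= M) /\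
  (forall wn w, loc_unif_cvg wn w -> f \o wn @ \oo --> f w).

Definition weakly_compact (PP : set (probability Omega R)) :=
  forall Pn : nat -> probability Omega R, (forall n, PP (Pn n)) ->
    exists (phi : nat -> nat) (P : probability Omega R),
      (forall k, (phi k < phi k.+1)%N) /\ PP P /\
      forall f, bcontinuous f ->
        (fun k => (\int[Pn (phi k)]_w (f w)%:E)%E) @ \oo --> (\int[P]_w (f w)%:E)%E.

Definition represents (PP : set (probability Omega R)) (E : (Omega -> R) -> R) :=
  forall X, cylB X -> ereal_sup [set (\int[P]_w (X w)%:E)%E | P in PP] = (E X)%:E.

Variable PP : set (probability Omega R).

Definition hatE (X : Omega -> \bar R) : \bar R :=
  ereal_sup [set (\int[P]_w X w)%E | P in PP].

Definition cap (A : set Omega) : \bar R := ereal_sup [set P A | P in PP].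

Definition qs (Q : Omega -> Prop) :=
  exists N : set Omega, measurable N /\ cap N = 0%E /\ forall w, ~ N w -> Q w.

(* L^1_G(Omega) and L^1_G(Omega_t) (Borel representatives of the completion) *)
Definition L1G (X : Omega -> \bar R) :=
  measurable_fun setT X /\
  exists Xn : nat -> Omega -> R, (forall n, cylB (Xn n)) /\
    (fun n => hatE (fun w => `|X w - (Xn n w)%:E|)%E) @ \oo --> 0%E.

Definition L1G_t (t : R) (X : Omega -> \bar R) :=
  measurable_fun setT X /\
  exists Xn : nat -> Omega -> R, (forall n, cylB_upto t (Xn n)) /\
    (fun n => hatE (fun w => `|X w - (Xn n w)%:E|)%E) @ \oo --> 0%E.

Definition Ft_measurable (t : R) (X : Omega -> \bar R) :=
  forall A : set \bar R, measurable A -> Ft t (X @^-1` A).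

Definition bL1 (X : Omega -> \bar R) :=
  measurable_fun setT X /\ (hatE (fun w => `|X w|)%E < +oo)%E.

Definition bL1_t (t : R) (X : Omega -> \bar R) :=
  Ft_measurable t X /\ (hatE (fun w => `|X w|)%E < +oo)%E.

Definition decr_to (Xn : nat -> Omega -> \bar R) (X : Omega -> \bar R) (w : Omega) :=
  (forall n, (Xn n.+1 w <= Xn n w)%E) /\ (fun n => Xn n w) @ \oo --> X w.
Definition incr_to (Xn : nat -> Omega -> \bar R) (X : Omega -> \bar R) (w : Omega) :=
  (forall n, (Xn n w <= Xn n.+1 w)%E) /\ (fun n => Xn n w) @ \oo --> X w.

Definition L1Gstar (X : Omega -> \bar R) :=
  bL1 X /\ exists Xn, (forall n, L1G (Xn n)) /\ qs (decr_to Xn X).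

Definition L1Gstar_t (t : R) (X : Omega -> \bar R) :=
  bL1_t t X /\ exists Xn, (forall n, L1G_t t (Xn n)) /\ qs (decr_to Xn X).

Definition L1Gstarstar (X : Omega -> \bar R) :=
  measurable_fun setT X /\
  exists Xn, (forall n, L1Gstar (Xn n)) /\ qs (incr_to Xn X).

Definition star_stopping_time (tau : Omega -> R) :=
  (forall w, 0 <= tau w) /\
  forall t : R, 0 <= t ->
    L1Gstar_t t (fun w => (if t <= tau w then 1 else 0)%:E).

End GFramework.

Notation Omega R d := (g_sigma_algebraType (@gen_all R d)).

(* Quasi-surely, each indicator of [{tau >= t}] is the decreasing limit of some [Y^t_m] in
   L^1_G; clamping them to [[0, 1]] keeps them in L^1_G and makes them real and decreasing.
   On the grid [t_{n,k} = k T / (n + 1)], [k <= n], the staircase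
   [sum_k T / (n + 1) * 1_{tau >= t_{n,k}}] lies between [tau /\ T] and
   [tau /\ T + T / (n + 1)], and it is the decreasing limit in [m] of the sums [Z_{n,m}]
   built in the same way from the clamped [Y^{t_{n,k}}_m]. L^1_G is stable under sums,
   scalings and minima, so the diagonal minima [min_{j <= N} Z_{j,N}] lie in L^1_G, and they
   decrease to [tau /\ T] outside a countable union of capacity-null sets, which is
   capacity-null. Finally [tau] is the increasing limit of [tau /\ (n + 1)]. *)

From HB Require Import structures.
From mathcomp Require Import all_boot all_order all_algebra.
From mathcomp Require Import all_classical all_reals all_analysis.
From mathcomp Require Import measurable_realfun lra.
Import Order.TTheory GRing.Theory Num.Theory numFieldNormedType.Exports.

Set Implicit Arguments.
Unset Strict Implicit.
Unset Printing Implicit Defensive.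

Local Open Scope classical_set_scope.
Local Open Scope ring_scope.

Section RealLemmas.
Variable R : realType.
Implicit Types (x y c T : R) (n N : nat).

Lemma minr_lipschitz (a b a' b' : R) :
  `|Num.min a b - Num.min a' b'| <= `|a - a'| + `|b - b'|.
Proof.
have := ler_norm (a - a'); have := ler_norm (a' - a).
have := ler_norm (b - b'); have := ler_norm (b' - b).
rewrite (distrC a' a) (distrC b' b) ler_norml.
by have [] := leP a b; have [] := leP a' b'; lra.
Qed.

Lemma maxr_lipschitz (a b a' b' : R) :
  `|Num.max a b - Num.max a' b'| <= `|a - a'| + `|b - b'|.
Proof.
have := ler_norm (a - a'); have := ler_norm (a' - a).
have := ler_norm (b - b'); have := ler_norm (b' - b).
rewrite (distrC a' a) (distrC b' b) ler_norml.
by have [] := leP a b; have [] := leP a' b'; lra.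
Qed.

Definition clamp01 x := Num.min (Num.max x 0) 1.

Lemma clamp01_lipschitz x y : `|clamp01 x - clamp01 y| <= `|x - y|.
Proof.
apply: le_trans (minr_lipschitz _ _ _ _) _; rewrite subrr normr0 addr0.
by apply: le_trans (maxr_lipschitz _ _ _ _) _; rewrite subrr normr0 addr0.
Qed.

Lemma clamp01_id x : 0 <= x <= 1 -> clamp01 x = x.
Proof. by case/andP=> x0 x1; rewrite /clamp01 max_l // min_l. Qed.

Lemma clamp01_continuous : continuous clamp01.
Proof.
move=> x; apply: (@continuous_min _ _ (fun x => Num.max x 0) (cst 1)).
  by apply: (@continuous_max _ _ id (cst 0)) => //; exact: cvg_cst.
exact: cvg_cst.
Qed.

Lemma min_le_sum_indicator x c N : 0 <= x -> 0 <= c ->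
  Num.min x (N%:R * c) <= \sum_(k < N) c * (if k%:R * c <= x then 1 else 0).
Proof.
move=> x0 c0; elim: N => [|N IH]; first by rewrite big_ord0 mul0r ge_min lexx orbT.
rewrite big_ord_recr /= -natr1 mulrDl mul1r.
case: (leP (N%:R * c) x) => Nx; rewrite ?mulr1 ?mulr0 ?addr0.
- by rewrite (min_r Nx) in IH; rewrite ge_min; apply/orP; right; lra.
- by rewrite (min_l (ltW Nx)) in IH; rewrite ge_min IH.
Qed.

Lemma sum_indicator_le x c N : 0 <= x -> 0 <= c ->
  \sum_(k < N.+1) c * (if k%:R * c <= x then 1 else 0) <= Num.min x (N%:R * c) + c.
Proof.
move=> x0 c0; elim: N => [|N IH].
  by rewrite big_ord1 /= !mul0r x0 (min_r x0) add0r mulr1.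
rewrite big_ord_recr /= -natr1 mulrDl mul1r.
case: (leP (N%:R * c + c) x) => Nx.
- have NNx : N%:R * c <= x by lra.
  by rewrite (min_r NNx) in IH; rewrite mulr1; lra.
- by rewrite mulr0 addr0; apply: le_trans IH _; rewrite lerD2r ge_min lexx.
Qed.

Definition grid T n k := k%:R * (T / n.+1%:R).

Definition staircase T n (g : nat -> R) := \sum_(k < n.+1) T / n.+1%:R * g k.

Lemma staircase_indicator_bounds x T n : 0 <= x -> 0 < T ->
  Num.min x T <= staircase T n (fun k => if grid T n k <= x then 1 else 0)
  <= Num.min x T + T / n.+1%:R.
Proof.
move=> x0 T0; set c := T / n.+1%:R.
have c0 : 0 <= c by rewrite divr_ge0 // ltW.
have cT : n.+1%:R * c = T by rewrite mulrC divfK.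
apply/andP; split; first by rewrite -{1}cT; exact: min_le_sum_indicator.
apply: le_trans (sum_indicator_le n x0 c0) _.
by rewrite lerD2r le_min2 // -cT ler_wpM2r // ler_nat.
Qed.

Lemma nonincreasing_staircase T n (g : nat -> nat -> R) : 0 <= T ->
  (forall k, nonincreasing_seq (g ^~ k)) -> nonincreasing_seq (fun m => staircase T n (g m)).
Proof.
move=> T0 gdec m m' mm'; apply: ler_sum => k _.
by apply: ler_wpM2l; [rewrite divr_ge0 | exact: gdec].
Qed.

Lemma staircase_cvg T n (g : nat -> nat -> R) (h : nat -> R) :
  (forall k, g ^~ k @ \oo --> h k) -> (fun m => staircase T n (g m)) @ \oo --> staircase T n h.
Proof.
move=> gh; apply: cvg_big => [|k _]; first exact: add_continuous.
by apply: cvgM; [exact: cvg_cst | exact: gh].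
Qed.

(* The seed [Z 0 N] of the minimum is harmless: [j = 0] is among the indices anyway. *)
Definition diag_min (Z : nat -> nat -> R) N := \big[Num.min/Z 0%N N]_(j < N.+1) Z j N.

Lemma nonincreasing_diag_min (Z : nat -> nat -> R) :
  (forall n, nonincreasing_seq (Z n)) -> nonincreasing_seq (diag_min Z).
Proof.
move=> Zdec; apply/nonincreasing_seqP => N; rewrite /diag_min; apply: le_bigmin => [|j _].
  exact: le_trans (bigmin_le_id _ _ _ _) (Zdec 0%N _ _ (leqnSn N)).
apply: le_trans (bigmin_le _ (widen_ord (leqnSn N.+1) j) _) _.
exact: Zdec.
Qed.

Lemma diag_min_cvg (L : R) (S : nat -> R) (Z : nat -> nat -> R) :
  (forall n, nonincreasing_seq (Z n)) -> (forall n, Z n @ \oo --> S n) ->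
  (forall n, L <= S n) -> (forall e, 0 < e -> exists n, S n <= L + e) ->
  diag_min Z @ \oo --> L.
Proof.
move=> Zdec ZS LS SL.
have SZ n m : S n <= Z n m.
  by rewrite -(cvg_lim _ (ZS n)) //; exact: nonincreasing_cvgn_ge (Zdec n) (cvgP _ (ZS n)) m.
apply/cvgrPdist_le => e e0; have e20 : 0 < e / 2 by rewrite divr_gt0.
have [n Sn] := SL _ e20.
have /cvgrPdist_le /(_ _ e20) [m0 _ Zm0] := ZS n.
exists (maxn n m0) => // N /=; rewrite geq_max => /andP[nN m0N].
have LW : L <= diag_min Z N.
  by apply: le_bigmin => [|j _]; apply: le_trans (LS _) (SZ _ _).
have WZ : diag_min Z N <= Z n N.
  by rewrite -ltnS in nN; exact: (bigmin_le _ (Ordinal nN) _).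
have := Zm0 N m0N; rewrite distrC ger0_norm ?subr_ge0 // => ZnN.
by rewrite distrC ger0_norm ?subr_ge0 //; lra.
Qed.

Local Open Scope ereal_scope.

Definition eclamp01 (x : \bar R) : R := fine (Order.min (Order.max x 0) 1).

Lemma eclamp01_EFin (r : R) : eclamp01 r%:E = clamp01 r.
Proof. by rewrite /eclamp01 /clamp01 -EFin_max -EFin_min. Qed.

Lemma EFin_eclamp01 (x : \bar R) : (eclamp01 x)%:E = Order.min (Order.max x 0) 1.
Proof.
case: x => [r||]; first by rewrite eclamp01_EFin EFin_min EFin_max.
- by rewrite /eclamp01 maxC maxey minC miney.
- by rewrite /eclamp01 maxNye min_l.
Qed.

Lemma eclamp01_le : {homo eclamp01 : x y / x <= y >-> (x <= y)%R}.
Proof. by move=> x y xy; rewrite -lee_fin !EFin_eclamp01 le_min2 // le_max2. Qed.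

Lemma eclamp01_dist (x : \bar R) (r : R) :
  `|(eclamp01 x)%:E - (clamp01 r)%:E| <= `|x - r%:E|.
Proof.
by case: x => [s||] /=; rewrite ?leey // eclamp01_EFin lee_fin clamp01_lipschitz.
Qed.

Lemma eclamp01_cvg (u : nat -> \bar R) (r : R) :
  u @ \oo --> r%:E -> eclamp01 \o u @ \oo --> clamp01 r.
Proof.
move=> /fine_cvgP[ufin ur].
have uE : {near \oo, clamp01 \o (fine \o u) =1 eclamp01 \o u}.
  by apply: filterS ufin => m /fineK um /=; rewrite -{2}um eclamp01_EFin.
apply: cvg_trans (near_eq_cvg uE) _; apply: cvg_comp ur _; exact: clamp01_continuous.
Qed.

Lemma squeeze_cvge0D (a b c : nat -> \bar R) : (forall n, 0 <= a n <= b n + c n) ->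
  b @ \oo --> 0 -> c @ \oo --> 0 -> a @ \oo --> 0.
Proof.
move=> abc b0 c0; apply: (@squeeze_cvge _ _ _ _ (cst 0) _ (b \+ c)).
- exact: nearW.
- exact: cvg_cst.
- by rewrite -(adde0 0); apply: cvgeD.
Qed.

Lemma squeeze_cvge0Z (a b : nat -> \bar R) (c : R) : (forall n, 0 <= a n <= c%:E * b n) ->
  b @ \oo --> 0 -> a @ \oo --> 0.
Proof.
move=> ab b0; apply: (@squeeze_cvge _ _ _ _ (cst 0) _ (fun n => c%:E * b n)).
- exact: nearW.
- exact: cvg_cst.
- by rewrite -(mule0 c%:E); apply: cvgeZl.
Qed.

Local Close Scope ereal_scope.

Definition stair_approx T (y : R -> nat -> \bar R) n m :=
  staircase T n (fun k => eclamp01 (y (grid T n k) m)).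

Lemma diag_min_stair_approx_cvg x T (y : R -> nat -> \bar R) : 0 <= x -> 0 < T ->
  (forall n k, nonincreasing_seq (y (grid T n k)) /\
     y (grid T n k) @ \oo --> (if grid T n k <= x then 1 else 0)%:E) ->
  nonincreasing_seq (diag_min (stair_approx T y)) /\
  diag_min (stair_approx T y) @ \oo --> Num.min x T.
Proof.
move=> x0 T0 hy.
have Zdec n : nonincreasing_seq (stair_approx T y n).
  apply: nonincreasing_staircase (ltW T0) _ => k m m' mm'.
  by apply: eclamp01_le; exact: (hy n k).1.
split; first exact: nonincreasing_diag_min.
pose S n := staircase T n (fun k => if grid T n k <= x then 1 else 0).
apply: (diag_min_cvg Zdec (S := S)).
- move=> n; apply: staircase_cvg => k; rewrite -[X in _ --> X]clamp01_id.
    exact: eclamp01_cvg (hy n k).2.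
  by case: ifP; rewrite lexx ?ler01.
- by move=> n; case/andP: (staircase_indicator_bounds n x0 T0).
- move=> e e0; exists (Num.truncn (T / e)).
  case/andP: (staircase_indicator_bounds (Num.truncn (T / e)) x0 T0) => _ /le_trans; apply.
  rewrite lerD2l ler_pdivrMr // mulrC -ler_pdivrMr //.
  exact: ltW (truncnS_gt _).
Qed.

Lemma min_natr_cvg x : (fun n => Num.min x n.+1%:R) @ \oo --> x.
Proof.
apply: cvg_near_cst; exists (Num.truncn x) => // n /= xn.
by rewrite min_l // (le_trans (ltW (truncnS_gt x))) // ler_nat.
Qed.

End RealLemmas.

Section CylinderFunctions.
Variables (R : realType) (d : nat).
Local Notation Om := (Omega R d).

Lemma measurable_B (s : R) (i : 'I_d) : 0 <= s -> measurable_fun setT (fun w : Om => B s w i).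
Proof.
move=> s0 _ A mA; rewrite setTI.
by apply: sub_gen_smallest; exists s, i, A.
Qed.

Lemma Ft_sub_measurable t : Ft t `<=` @measurable _ Om.
Proof.
apply: smallest_sub; first exact: sigma_algebra_measurable.
by move=> _ [s [i [A [s0 [st [mA ->]]]]]]; apply: sub_gen_smallest; exists s, i, A.
Qed.

Lemma l1_ge0 m n (x : 'M[R]_(m, n)) : 0 <= l1 x.
Proof. by apply: sumr_ge0 => k _; apply: sumr_ge0. Qed.

Lemma l1N m n (x : 'M[R]_(m, n)) : l1 (- x) = l1 x.
Proof. by apply: eq_bigr => k _; apply: eq_bigr => i _; rewrite mxE normrN. Qed.

Lemma l1_col_mx m1 m2 n (x : 'M[R]_(m1, n)) (y : 'M[R]_(m2, n)) :
  l1 (col_mx x y) = l1 x + l1 y.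
Proof.
rewrite /l1 big_split_ord; congr (_ + _); apply: eq_bigr => k _; apply: eq_bigr => i _.
  by rewrite col_mxEu.
by rewrite col_mxEd.
Qed.

Lemma l1_usubmx_le m1 m2 n (x : 'M[R]_(m1 + m2, n)) : l1 (usubmx x) <= l1 x.
Proof. by rewrite -{2}(vsubmxK x) l1_col_mx lerDl l1_ge0. Qed.

Lemma l1_dsubmx_le m1 m2 n (x : 'M[R]_(m1 + m2, n)) : l1 (dsubmx x) <= l1 x.
Proof. by rewrite -{2}(vsubmxK x) l1_col_mx lerDr l1_ge0. Qed.

Lemma rat_mx_approx m n (y : 'M[R]_(m, n)) (e : R) : 0 < e ->
  exists r : 'M[rat]_(m, n), l1 (y - map_mx ratr r) <= e.
Proof.
move=> e0; pose c := e / (m * n).+1%:R.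
have c0 : 0 < c by rewrite divr_gt0.
have yc k i : y k i - c < y k i + c by rewrite ltrD2l gtrN.
exists (\matrix_(k, i) xchoose (rat_in_itvoo (yc k i))).
apply: (@le_trans _ _ (\sum_(k < m) \sum_(i < n) c)).
  apply: ler_sum => k _; apply: ler_sum => i _; rewrite !mxE.
  move: (xchooseP (rat_in_itvoo (yc k i))); rewrite in_itv /= => /andP[h1 h2].
  by rewrite ler_norml; apply/andP; split; lra.
rewrite (eq_bigr (fun _ => c *+ n)) => [|k _]; last by rewrite sumr_const card_ord.
rewrite sumr_const card_ord -mulrnA -mulr_natr /c mulrAC ler_pdivrMr ?ltr0n //.
by rewrite ler_pM2l // ler_nat mulnC.
Qed.

Lemma lipschitz_le_cone m n (phi : 'M[R]_(m, n) -> R) (K : R) (x y : 'M[R]_(m, n)) :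
  (forall x y, `|phi x - phi y| <= K * l1 (x - y)) -> phi x <= phi y + K * l1 (x - y).
Proof. by move=> phiK; rewrite -lerBlDl; apply: le_trans (ler_norm _) _; rewrite phiK. Qed.

Definition rat_mx_enum {m n} (k : nat) : 'M[R]_(m, n) := map_mx ratr (odflt 0 (unpickle k)).

Lemma lipschitz_inf_rat m n (phi : 'M[R]_(m, n) -> R) (K : R) (x : 'M[R]_(m, n)) :
  0 <= K -> (forall x y, `|phi x - phi y| <= K * l1 (x - y)) ->
  phi x = inf (range (fun k => phi (rat_mx_enum k) + K * l1 (x - rat_mx_enum k))).
Proof.
move=> K0 phiK; set h := fun k => _.
have phi_le k : phi x <= h k by exact: lipschitz_le_cone.
apply/le_anti/andP; split.
  by apply: lb_le_inf => [|_ [k _ <-]]; [exists (h 0%N), 0%N | exact: phi_le].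
apply/ler_addgt0Pr => e e0; pose c := e / (K * 2 + 1).
have K21 : 0 < K * 2 + 1 by rewrite ltr_wpDl // mulr_ge0.
have c0 : 0 < c by rewrite divr_gt0.
have [r xr] := rat_mx_approx x c0.
have qr : rat_mx_enum (pickle r) = map_mx ratr r by rewrite /rat_mx_enum pickleK.
apply: (@le_trans _ _ (h (pickle r))).
  by apply: ge_inf; [exists (phi x) => _ [k _ <-]; exact: phi_le | exists (pickle r)].
rewrite /h qr; have := lipschitz_le_cone (map_mx ratr r) x phiK.
rewrite -opprB l1N.
have : K * l1 (x - map_mx ratr r) <= K * c by exact: ler_wpM2l.
have : (K * 2 + 1) * c = e by rewrite /c mulrC divfK ?gt_eqF.
by nra.
Qed.

Lemma measurable_lipschitz_cylinder n (ts : 'I_n -> R) (phi : 'M[R]_(n, d) -> R) (K : R) :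
  (forall k, 0 <= ts k) -> 0 <= K -> (forall x y, `|phi x - phi y| <= K * l1 (x - y)) ->
  measurable_fun setT (phi \o cylv ts : Om -> R).
Proof.
move=> ts0 K0 phiK.
pose h k (w : Om) := phi (rat_mx_enum k) + K * l1 (cylv ts w - rat_mx_enum k).
have mh k : measurable_fun setT (h k).
  apply: measurable_funD; first exact: measurable_cst.
  apply: measurable_funM; first exact: measurable_cst.
  apply: measurable_sum => a; apply: measurable_sum => i /=.
  under eq_fun do rewrite !mxE.
  apply: measurableT_comp; first exact: normr_measurable.
  by apply: measurable_funB; [exact: measurable_B | exact: measurable_cst].
suff -> : phi \o cylv ts = fun w => infs (h ^~ w) 0.
  apply: measurable_fun_infs => // w _; exists (phi (cylv ts w)) => _ [k _ <-].
  exact: lipschitz_le_cone.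
apply/funext => w; rewrite /infs /= (lipschitz_inf_rat (cylv ts w) K0 phiK).
by congr inf; apply/seteqP; split => _ [k _ <-]; exists k.
Qed.

Lemma bLip_nonneg m n (phi : 'M[R]_(m, n) -> R) : bLip phi ->
  exists M C, [/\ 0 <= C, forall x, `|phi x| <= M
                & forall x y, `|phi x - phi y| <= C * l1 (x - y)].
Proof.
move=> [[M hM] [C hC]]; exists M, `|C|; split => // x y.
exact: le_trans (hC x y) (ler_wpM2r (l1_ge0 _) (ler_norm C)).
Qed.

Lemma measurable_cylB (X : Om -> R) : cylB X -> measurable_fun setT X.
Proof.
move=> [n [ts [phi [ts0 [/bLip_nonneg[M [C [C0 _ phiC]]] ->]]]]].
exact: measurable_lipschitz_cylinder ts0 C0 phiC.
Qed.

Lemma cylB_cst (c : R) : cylB (fun _ : Om => c).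
Proof.
exists 0%N, (fun _ => 0), (fun _ => c); split => //; split => //; split; first by exists `|c|.
by exists 0 => x y; rewrite subrr normr0 mul0r.
Qed.

Lemma cylB_upto_cylB t (X : Om -> R) : cylB_upto t X -> cylB X.
Proof.
move=> [n [ts [phi [ts0 [phiL ->]]]]]; exists n, ts, phi; split => // k.
by case/andP: (ts0 k).
Qed.

Lemma cylB_comp (v : R -> R) (K : R) (X : Om -> R) : 0 <= K ->
  (forall a b, `|v a - v b| <= K * `|a - b|) -> cylB X -> cylB (v \o X).
Proof.
move=> K0 vK [n [ts [phi [ts0 [/bLip_nonneg[M [C [C0 hM hC]]] ->]]]]].
exists n, ts, (v \o phi); split => //; split => //; split.
  exists (K * M + `|v 0|) => x /=; rewrite -[v (phi x)](subrK (v 0)).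
  apply: le_trans (ler_normD _ _) _; rewrite lerD2r.
  by apply: le_trans (vK _ _) _; rewrite subr0 ler_wpM2l.
exists (K * C) => x y /=; apply: le_trans (vK _ _) _.
by rewrite -mulrA ler_wpM2l.
Qed.

Definition cat_times n1 n2 (ts1 : 'I_n1 -> R) (ts2 : 'I_n2 -> R) (k : 'I_(n1 + n2)) : R :=
  match fintype.split k with inl a => ts1 a | inr b => ts2 b end.

Lemma cylv_cat_times n1 n2 (ts1 : 'I_n1 -> R) (ts2 : 'I_n2 -> R) (w : Om) :
  cylv (cat_times ts1 ts2) w = col_mx (cylv ts1 w) (cylv ts2 w).
Proof.
by apply/matrixP => k i; rewrite !mxE /cat_times; case: fintype.split => a; rewrite mxE.
Qed.

Lemma cylB_op2 (op : R -> R -> R) (X Y : Om -> R) :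
  (forall a b a' b', `|op a b - op a' b'| <= `|a - a'| + `|b - b'|) ->
  cylB X -> cylB Y -> cylB (fun w => op (X w) (Y w)).
Proof.
move=> opL [n1 [ts1 [phi1 [ts10 [/bLip_nonneg[M1 [C1 [C10 hM1 hC1]]] ->]]]]].
move=> [n2 [ts2 [phi2 [ts20 [/bLip_nonneg[M2 [C2 [C20 hM2 hC2]]] ->]]]]].
exists (n1 + n2)%N, (cat_times ts1 ts2), (fun z => op (phi1 (usubmx z)) (phi2 (dsubmx z))).
split; first by move=> k; rewrite /cat_times; case: fintype.split.
split; last by apply/funext => w /=; rewrite cylv_cat_times col_mxKu col_mxKd.
split.
  exists (M1 + M2 + `|op 0 0|) => z; rewrite -[op _ _](subrK (op 0 0)).
  apply: le_trans (ler_normD _ _) _; rewrite lerD2r.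
  by apply: le_trans (opL _ _ _ _) _; rewrite !subr0 lerD.
exists (C1 + C2) => z z'; apply: le_trans (opL _ _ _ _) _.
rewrite mulrDl; apply: lerD.
  by apply: le_trans (hC1 _ _) _; rewrite -linearB ler_wpM2l // l1_usubmx_le.
by apply: le_trans (hC2 _ _) _; rewrite -linearB ler_wpM2l // l1_dsubmx_le.
Qed.

End CylinderFunctions.

Section UpperExpectation.
Variables (R : realType) (d : nat) (PP : set (probability (Omega R d) R)).
Hypothesis PP0 : PP !=set0.
Local Notation Om := (Omega R d).
Local Open Scope ereal_scope.

Lemma integral_le_hatE (F : Om -> \bar R) (P : probability Om R) :
  PP P -> \int[P]_w F w <= hatE PP F.
Proof. by move=> PPP; apply: ereal_sup_ubound; exists P. Qed.

Lemma measure_le_cap (A : set Om) (P : probability Om R) : PP P -> P A <= cap PP A.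
Proof. by move=> PPP; apply: ereal_sup_ubound; exists P. Qed.

Lemma hatE_ge0 (F : Om -> \bar R) : (forall w, 0 <= F w) -> 0 <= hatE PP F.
Proof.
have [P PPP] := PP0; move=> F0; apply: le_trans (integral_le_hatE F PPP).
exact: integral_ge0.
Qed.

Lemma hatE0 : hatE PP (fun _ => 0) = 0.
Proof.
apply/le_anti/andP; split; last exact: hatE_ge0.
by apply: ge_ereal_sup => _ [P _ <-]; rewrite integral0.
Qed.

Lemma hatE_le_add (F G1 G2 : Om -> \bar R) :
  measurable_fun setT F -> measurable_fun setT G1 -> measurable_fun setT G2 ->
  (forall w, 0 <= F w) -> (forall w, 0 <= G1 w) -> (forall w, 0 <= G2 w) ->
  (forall w, F w <= G1 w + G2 w) -> hatE PP F <= hatE PP G1 + hatE PP G2.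
Proof.
move=> mF mG1 mG2 F0 G10 G20 FG; apply: ge_ereal_sup => _ [P PPP <-].
apply: (@le_trans _ _ (\int[P]_w (G1 w + G2 w))).
  by apply: ge0_le_integral => //; exact: emeasurable_funD.
rewrite ge0_integralD //.
by apply: leeD; exact: integral_le_hatE.
Qed.

Lemma hatE_le_scale (F G : Om -> \bar R) (c : R) : (0 <= c)%R ->
  measurable_fun setT F -> measurable_fun setT G ->
  (forall w, 0 <= F w) -> (forall w, 0 <= G w) ->
  (forall w, F w <= c%:E * G w) -> hatE PP F <= c%:E * hatE PP G.
Proof.
move=> c0 mF mG F0 G0 FG; apply: ge_ereal_sup => _ [P PPP <-].
apply: (@le_trans _ _ (\int[P]_w (c%:E * G w))).
  by apply: ge0_le_integral => //; exact: measurable_funeM.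
rewrite ge0_integralZl //.
by apply: lee_wpmul2l; [rewrite lee_fin | exact: integral_le_hatE].
Qed.

Lemma cap_ge0 (A : set Om) : measurable A -> 0 <= cap PP A.
Proof.
have [P PPP] := PP0; move=> mA; apply: le_trans (measure_le_cap A PPP).
exact: measure_ge0.
Qed.

Lemma cap_bigcup_eq0 (F : nat -> set Om) : (forall n, measurable (F n)) ->
  (forall n, cap PP (F n) = 0) -> cap PP (\bigcup_n F n) = 0.
Proof.
move=> mF cF; apply/le_anti/andP; split; last exact/cap_ge0/bigcupT_measurable.
apply: ge_ereal_sup => _ [P PPP <-].
have PF n : P (F n) = 0.
  apply/le_anti/andP; split; last exact: measure_ge0.
  by rewrite -(cF n); exact: measure_le_cap.
apply: le_trans (_ : _ <= \sum_(0 <= n <oo) P (F n)) _.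
  by apply: (measure_sigma_subadditive P) => //; exact: bigcupT_measurable.
by rewrite (_ : \sum_(0 <= n <oo) _ = 0) //; apply: eseries0 => n _ _; exact: PF.
Qed.

Lemma qs_mono (P Q : Om -> Prop) : (forall w, P w -> Q w) -> qs PP P -> qs PP Q.
Proof. by move=> PQ [N [mN [cN NP]]]; exists N; do 2 split => //; move=> w /NP /PQ. Qed.

Lemma qs_everywhere (P : Om -> Prop) : (forall w, P w) -> qs PP P.
Proof.
move=> allP; exists set0; split => //; split => //.
apply/le_anti/andP; split; last exact: cap_ge0.
by apply: ge_ereal_sup => _ [P' _ <-]; rewrite measure0.
Qed.

Lemma qs_forall_nat (P : nat -> Om -> Prop) :
  (forall n, qs PP (P n)) -> qs PP (fun w => forall n, P n w).
Proof.
move=> /choice[N hN]; exists (\bigcup_n N n); split.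
  by apply: bigcupT_measurable => n; case: (hN n).
split; first by apply: cap_bigcup_eq0 => n; case: (hN n) => [? []].
by move=> w Nw n; apply: (hN n).2.2 => Nnw; apply: Nw; exists n.
Qed.

Lemma L1G_t_L1G t (X : Om -> \bar R) : L1G_t PP t X -> L1G PP X.
Proof.
move=> [mX [Xn [cXn XnX]]]; split => //; exists Xn; split => // n.
exact: cylB_upto_cylB (cXn n).
Qed.

Lemma measurable_EFin_dist (f g : Om -> R) : measurable_fun setT f -> measurable_fun setT g ->
  measurable_fun setT (fun w => `|(f w)%:E - (g w)%:E|).
Proof.
move=> mf mg; apply/measurable_EFinP; apply: measurableT_comp; first exact: normr_measurable.
exact: measurable_funB.
Qed.

Lemma L1G_cst (c : R) : L1G PP (fun _ => c%:E).
Proof.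
split; first exact: measurable_cst.
exists (fun _ _ => c); split => [n|]; first exact: cylB_cst.
under eq_fun do under eq_fun do rewrite subee // abse0.
by rewrite hatE0; exact: cvg_cst.
Qed.

Lemma L1G_op2 (op : R -> R -> R) (f g : Om -> R) :
  (forall a b a' b', `|op a b - op a' b'| <= `|a - a'| + `|b - b'|)%R ->
  (forall f g : Om -> R, measurable_fun setT f -> measurable_fun setT g ->
     measurable_fun setT (fun w => op (f w) (g w))) ->
  L1G PP (fun w => (f w)%:E) -> L1G PP (fun w => (g w)%:E) ->
  L1G PP (fun w => (op (f w) (g w))%:E).
Proof.
move=> opL opM [/measurable_EFinP mf [fn [cfn fnf]]] [/measurable_EFinP mg [gn [cgn gng]]].
have mfn n := measurable_cylB (cfn n); have mgn n := measurable_cylB (cgn n).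
split; first by apply/measurable_EFinP; exact: opM.
exists (fun n w => op (fn n w) (gn n w)); split => [n|]; first exact: cylB_op2.
apply: (squeeze_cvge0D _ fnf gng) => n; apply/andP; split; first exact: hatE_ge0.
apply: hatE_le_add => //; try exact: measurable_EFin_dist.
  by apply: measurable_EFin_dist; exact: opM.
by move=> w; rewrite -!EFinB -EFinD lee_fin.
Qed.

Lemma L1G_scale (c : R) (f : Om -> R) :
  L1G PP (fun w => (f w)%:E) -> L1G PP (fun w => (c * f w)%:E).
Proof.
move=> [/measurable_EFinP mf [fn [cfn fnf]]].
have mcf (g : Om -> R) : measurable_fun setT g -> measurable_fun setT (fun w => c * g w)%R.
  by move=> mg; apply: measurable_funM => //; exact: measurable_cst.
split; first by apply/measurable_EFinP; exact: mcf.
exists (fun n w => c * fn n w)%R; split => [n|].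
  by apply: (cylB_comp (v := *%R c) (K := `|c|)) => // a b; rewrite -mulrBr normrM.
apply: (squeeze_cvge0Z (c := `|c|%R) _ fnf) => n; apply/andP; split; first exact: hatE_ge0.
apply: hatE_le_scale => //.
- by apply: measurable_EFin_dist; apply: mcf => //; exact: measurable_cylB.
- by apply: measurable_EFin_dist => //; exact: measurable_cylB.
- by move=> w; rewrite -!EFinB -EFinM lee_fin -mulrBr normrM.
Qed.

Lemma L1G_clamp (X : Om -> \bar R) : L1G PP X -> L1G PP (fun w => (eclamp01 (X w))%:E).
Proof.
move=> [mX [Xn [cXn XnX]]].
have mXn n : measurable_fun setT (Xn n) := measurable_cylB (cXn n).
have mcX : measurable_fun setT (fun w => (eclamp01 (X w))%:E).
  under eq_fun do rewrite EFin_eclamp01.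
  apply: measurable_mine; last exact: measurable_cst.
  by apply: measurable_maxe => //; exact: measurable_cst.
split => //; exists (fun n w => clamp01 (Xn n w)); split => [n|].
  by apply: (cylB_comp (v := @clamp01 R) (K := 1)) => // a b; rewrite mul1r clamp01_lipschitz.
apply: (squeeze_cvge0Z (c := 1%R) _ XnX) => n; apply/andP; split; first exact: hatE_ge0.
apply: hatE_le_scale => //.
- apply: measurable_EFin_dist; first exact/measurable_EFinP.
  exact: measurableT_comp (continuous_measurable_fun (@clamp01_continuous R)) (mXn n).
- apply: measurableT_comp; first exact: abse_measurable.
  by apply: emeasurable_funB => //; exact/measurable_EFinP.
- by move=> w; rewrite mul1e; exact: eclamp01_dist.
Qed.

Lemma L1G_sum n (F : 'I_n -> Om -> R) : (forall k, L1G PP (fun w => (F k w)%:E)) ->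
  L1G PP (fun w => (\sum_(k < n) F k w)%:E).
Proof.
elim: n F => [|n IH] F FL1G.
  by under eq_fun do rewrite big_ord0; exact: L1G_cst.
under eq_fun do rewrite big_ord_recr.
apply: (@L1G_op2 +%R).
- by move=> a b a' b'; rewrite opprD addrACA ler_normD.
- by move=> f g mf mg; exact: measurable_funD.
- by apply: IH => k; exact: FL1G.
- exact: FL1G.
Qed.

Lemma L1G_bigmin n (x0 : Om -> R) (F : 'I_n -> Om -> R) : L1G PP (fun w => (x0 w)%:E) ->
  (forall k, L1G PP (fun w => (F k w)%:E)) ->
  L1G PP (fun w => (\big[Num.min/x0 w]_(k < n) F k w)%:E).
Proof.
elim: n F => [|n IH] F x0L1G FL1G; first by under eq_fun do rewrite big_ord0.
under eq_fun do rewrite big_ord_recl.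
apply: (@L1G_op2 Num.min).
- exact: minr_lipschitz.
- by move=> f g mf mg; exact: measurable_minr.
- exact: FL1G.
- by apply: IH => // k; exact: FL1G.
Qed.

Local Close Scope ereal_scope.

Variable tau : Om -> R.
Hypothesis htau : star_stopping_time PP tau.

Lemma measurable_star_stopping_time : measurable_fun setT tau.
Proof.
have [tau0 tauI] := htau.
apply: (measurability (@RGenCInfty.G R)) => [|/= _ [_] [x] -> <-].
  exact: RGenCInfty.measurableE.
rewrite setTI; have -> : tau @^-1` `[x, +oo[%classic = [set w | x <= tau w].
  by apply/seteqP; split => w /=; rewrite in_itv /= andbT.
have [x0|x0] := lerP 0 x; last first.
  rewrite (_ : [set w | x <= tau w] = setT); first exact: measurableT.
  by apply/seteqP; split => // w _ /=; rewrite (le_trans (ltW x0)).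
apply: (Ft_sub_measurable (t := x)); have [[mI _] _] := tauI x x0.
rewrite (_ : [set w | x <= tau w] =
  (fun w => ((if x <= tau w then 1 else 0)%:E : \bar R)) @^-1` [set 1%:E]).
  by apply: mI; rewrite -image_set1; apply: measurable_image_EFin; exact: measurable_set1.
apply/seteqP; split => w /=; first by move=> ->.
by case: ifP => // _ /eqP; rewrite eqe eq_sym oner_eq0.
Qed.

Lemma bL1_min_star_stopping_time T : 0 <= T -> bL1 PP (fun w => (Num.min (tau w) T)%:E).
Proof.
move=> T0; have [tau0 _] := htau.
have mmin : measurable_fun setT (fun w => Num.min (tau w) T).
  by apply: measurable_minr; [exact: measurable_star_stopping_time | exact: measurable_cst].
split; first exact/measurable_EFinP.
apply: (@le_lt_trans _ _ T%:E); last exact: ltry.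
apply: ge_ereal_sup => _ [P PPP <-].
apply: (@le_trans _ _ (\int[P]_w (cst T%:E w))%E).
  apply: ge0_le_integral => //.
    by apply: measurableT_comp; [exact: abse_measurable | exact/measurable_EFinP].
  move=> w _; rewrite lee_fin ger0_norm ?ge_min ?lexx ?orbT //.
  by rewrite le_min tau0 T0.
rewrite integral_cst // -[leRHS]mule1; apply: lee_wpmul2l; first by rewrite lee_fin.
exact: probability_le1.
Qed.

Lemma star_stopping_time_indicator_approx : exists Y : R -> nat -> Om -> \bar R,
  forall t, 0 <= t -> (forall m, L1G PP (Y t m)) /\
    qs PP (decr_to (Y t) (fun w => (if t <= tau w then 1 else 0)%:E)).
Proof.
pose indicator t w := ((if t <= tau w then 1 else 0)%:E : \bar R).
suff /choice[Y hY] : forall t, exists Yt : nat -> Om -> \bar R, 0 <= t ->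
    (forall m, L1G PP (Yt m)) /\ qs PP (decr_to Yt (indicator t)) by exists Y.
move=> t; have [t0|_] := boolP (0 <= t); last by exists (fun _ _ => 0%E).
have [_ [Yt [YtL1G Ytdecr]]] := htau.2 t t0.
by exists Yt => _; split => // m; exact: L1G_t_L1G (YtL1G m).
Qed.

Lemma L1Gstar_min_star_stopping_time T : 0 < T ->
  L1Gstar PP (fun w => (Num.min (tau w) T)%:E).
Proof.
move=> T0; split; first exact/bL1_min_star_stopping_time/ltW.
have [Y hY] := star_stopping_time_indicator_approx.
have grid0 n k : 0 <= grid T n k by rewrite mulr_ge0 // divr_ge0 // ltW.
have stairL1G n m : L1G PP (fun w => (stair_approx T (fun t m => Y t m w) n m)%:E).
  apply: L1G_sum => k; apply: L1G_scale; apply: L1G_clamp.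
  exact: (hY _ (grid0 _ _)).1.
exists (fun N w => (diag_min (stair_approx T (fun t m => Y t m w)) N)%:E).
split=> [N|]; first exact: L1G_bigmin.
apply: qs_mono (qs_forall_nat (fun n => qs_forall_nat (fun k => (hY _ (grid0 n k)).2))).
move=> w Yw; have [Wdec Wcvg] := diag_min_stair_approx_cvg (y := fun t m => Y t m w)
  (htau.1 w) T0 (fun n k => conj ((nonincreasing_seqP _).1 (Yw n k).1) (Yw n k).2).
split => [N|]; first by rewrite lee_fin; exact: Wdec.
by apply: cvg_EFin; [exact: nearW | exact: Wcvg].
Qed.

End UpperExpectation.

Lemma represents_nonempty (R : realType) (d : nat) (PP : set (probability (Omega R d) R))
  (E : (Omega R d -> R) -> R) : represents PP E -> PP !=set0.
Proof.
move=> PPE; apply: contrapT => PP0; move: (PPE _ (@cylB_cst R d 0)).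
set S := ereal_sup _ => SE.
have : S = -oo%E by apply/ereal_sup_ninfty => x [P PPP _]; case: PP0; exists P.
by rewrite SE.
Qed.

Theorem proposition3p24 (R : realType) (d : nat)
  (G : 'M[R]_d -> R) (E : (Omega R d -> R) -> R)
  (PP : set (probability (Omega R d) R))
  (hG : monotone_sublinear G) (hE : is_G_expectation G E)
  (hPPc : weakly_compact PP) (hPPr : represents PP E)
  (tau : Omega R d -> R) (htau : star_stopping_time PP tau) :
  (forall T : R, 0 < T -> L1Gstar PP (fun w => (Num.min (tau w) T)%:E)) /\
  L1Gstarstar PP (fun w => (tau w)%:E).
Proof.
have PP0 := represents_nonempty hPPr.
have tau_min_L1Gstar := L1Gstar_min_star_stopping_time PP0 htau.
split; first exact: tau_min_L1Gstar.
split; first by apply/measurable_EFinP; exact: measurable_star_stopping_time htau.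
exists (fun n w => (Num.min (tau w) n.+1%:R)%:E); split => [n|].
  exact: tau_min_L1Gstar.
apply: qs_everywhere => // w; split => [n|].
  by rewrite lee_fin le_min2 // ler_nat.
by apply: cvg_EFin; [exact: nearW | exact: min_natr_cvg].
Qed.
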